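(* Let $\mathcal{P}$ be a finite bias distribution and let $\ell'\ge2$, $0\le x'\le\ell'-1$ be integers. If the condition $E_p[f_{\ell,x}(p)]=0$ holds for any two of the three pairs $(\ell,x)=(\ell'-1,x')$, $(\ell',x')$, $(\ell',x'+1)$, then it also holds for the remaining pair.
   Context: A finite bias distribution is a probability distribution $\mathcal{P}$ supported on a finite subset of $(0,1)$ that is symmetric: it outputs $a$ and $1-a$ with the same probability. $E_p$ is expectation over $p\sim\mathcal{P}$. $\sigma(p)=\sqrt{(1-p)/p}$; for integers $\ell\ge1$, $0\le x\le\ell$, $f_{\ell,x}(p)=p^x(1-p)^{\ell-x}(x\sigma(p)-(\ell-x)\sigma(1-p))$. *)

From Stdlib Require Import Reals List.
Import ListNotations.
Open Scope R_scope.

Record bias_dist := {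
  supp : list R;
  mass : R -> R;
  supp_nodup : NoDup supp;
  supp_in01 : forall a, In a supp -> 0 < a < 1;
  mass_nonneg : forall a, In a supp -> 0 <= mass a;
  mass_sum1 : fold_right Rplus 0 (map mass supp) = 1;
  symmetric : forall a, In a supp -> In (1 - a) supp /\ mass (1 - a) = mass a
}.

Definition Ep (P : bias_dist) (g : R -> R) : R :=
  fold_right Rplus 0 (map (fun a => mass P a * g a) (supp P)).

Definition sigma (p : R) : R := sqrt ((1 - p) / p).

Definition fbias (l x : nat) (p : R) : R :=
  p ^ x * (1 - p) ^ (l - x) *
  (INR x * sigma p - INR (l - x) * sigma (1 - p)).

(* Since p σ(p) = (1 - p) σ(1 - p) = √(p(1 - p)) on (0,1), the functions f
   satisfy the Pascal-type identity f_{ℓ,x} = f_{ℓ+1,x} + f_{ℓ+1,x+1} there.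
   By linearity of expectation E[f_{ℓ'-1,x'}] = E[f_{ℓ',x'}] + E[f_{ℓ',x'+1}],
   so any two of the three expectations vanishing forces the third to vanish. *)

From Stdlib Require Import Reals Lra Lia List.
(* Imported after Reals, whose [sigma] (finite sums) would otherwise shadow it. *)
Open Scope R_scope.

Lemma mul_sigma (p : R) : 0 < p <= 1 -> p * sigma p = sqrt (p * (1 - p)).
Proof.
  intros [p_gt0 p_le1]; unfold sigma.
  rewrite <- (sqrt_square p) at 1 by lra.
  rewrite <- sqrt_mult;
    [| nra | apply Rmult_le_pos; [lra | left; apply Rinv_0_lt_compat; lra]].
  f_equal; field; lra.
Qed.

Lemma mul_sigma_sym (p : R) : 0 < p < 1 -> p * sigma p = (1 - p) * sigma (1 - p).
Proof.
  intros hp.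
  rewrite mul_sigma, mul_sigma by lra.
  f_equal; ring.
Qed.

Lemma fbias_pascal (l x : nat) (p : R) : 0 < p < 1 -> (x <= l)%nat ->
  fbias l x p = fbias (S l) x p + fbias (S l) (S x) p.
Proof.
  intros hp hx; unfold fbias.
  replace (S l - x)%nat with (S (l - x)) by lia.
  replace (S l - S x)%nat with (l - x)%nat by lia.
  rewrite !S_INR; simpl.
  pose proof (mul_sigma_sym p hp) as sigma_sym.
  set (s := sigma p) in *; set (t := sigma (1 - p)) in *.
  transitivity (p ^ x * (1 - p) ^ (l - x) * (INR x * s - INR (l - x) * t)
                + p ^ x * (1 - p) ^ (l - x) * (p * s - (1 - p) * t)).
  - rewrite sigma_sym; ring.
  - ring.
Qed.

Lemma Ep_ext (P : bias_dist) (f g : R -> R) :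
  (forall a, In a (supp P) -> f a = g a) -> Ep P f = Ep P g.
Proof.
  unfold Ep; induction (supp P) as [|a s IH]; intros fg; simpl; [reflexivity|].
  rewrite fg by (left; reflexivity).
  rewrite IH by (intros b hb; apply fg; right; exact hb).
  reflexivity.
Qed.

Lemma Ep_add (P : bias_dist) (f g : R -> R) :
  Ep P (fun a => f a + g a) = Ep P f + Ep P g.
Proof.
  unfold Ep; induction (supp P) as [|a s IH]; simpl; [ring|].
  rewrite IH; ring.
Qed.

Lemma Ep_fbias_pascal (P : bias_dist) (l x : nat) : (x <= l)%nat ->
  Ep P (fbias l x) = Ep P (fbias (S l) x) + Ep P (fbias (S l) (S x)).
Proof.
  intros hx; rewrite <- Ep_add.
  apply Ep_ext; intros a ha.
  apply fbias_pascal; [apply (supp_in01 P a ha) | exact hx].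
Qed.

Theorem lemma2 (P : bias_dist) (l' x' : nat) :
  (2 <= l')%nat -> (x' <= l' - 1)%nat ->
  let A := Ep P (fbias (l' - 1)%nat x') = 0 in
  let B := Ep P (fbias l' x') = 0 in
  let C := Ep P (fbias l' (x' + 1)%nat) = 0 in
  (A /\ B -> C) /\ (A /\ C -> B) /\ (B /\ C -> A).
Proof.
  intros hl hx A B C; unfold A, B, C.
  destruct l' as [|l]; [lia|].
  replace (S l - 1)%nat with l in * by lia.
  rewrite Nat.add_1_r, (Ep_fbias_pascal P l x' hx).
  lra.
Qed.
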